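(* Let $R>0$, let $\partial\mathcal{B}=\{\boldsymbol{x}\in\mathbb{R}^d:\|\boldsymbol{x}\|_2=R\}$, and let $\boldsymbol{x}_0\in\mathbb{R}^d$ with $\boldsymbol{x}_0\neq0$ and $\|\boldsymbol{x}_0\|_2\neq R$. Let $\boldsymbol{x}^*=R\boldsymbol{x}_0/\|\boldsymbol{x}_0\|_2$ be the closest point of $\partial\mathcal{B}$ to $\boldsymbol{x}_0$ and $\mathcal{T}=\{\boldsymbol{x}:\langle\boldsymbol{x}-\boldsymbol{x}^*,\boldsymbol{x}^*\rangle=0\}$ the tangent hyperplane to $\partial\mathcal{B}$ at $\boldsymbol{x}^*$. Let $\mathcal{S}\subseteq\mathbb{R}^d$ be a linear subspace with orthogonal projection $\mathbf{P}_{\mathcal S}$ such that $\mathbf{P}_{\mathcal S}\boldsymbol{x}_0\neq0$ and such that there exists $\boldsymbol{r}\in\mathcal S$ with $\boldsymbol{x}_0+\boldsymbol{r}\in\partial\mathcal{B}$. Let $\boldsymbol{r}^{\mathcal T}_{\mathcal S}$ be the minimizer of $\|\boldsymbol{r}\|_2$ over $\{\boldsymbol{r}\in\mathcal S:\boldsymbol{x}_0+\boldsymbol{r}\in\mathcal T\}$ and let $\boldsymbol{r}^{\mathcal B}_{\mathcal S}$ be any minimizer of $\|\boldsymbol{r}\|_2$ over $\{\boldsymbol{r}\in\mathcal S:\boldsymbol{x}_0+\boldsymbol{r}\in\partial\mathcal B\}$. Then $\boldsymbol{r}^{\mathcal T}_{\mathcal S}$ and $\boldsymbol{r}^{\mathcal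 B}_{\mathcal S}$ are both scalar multiples of $\mathbf{P}_{\mathcal S}\boldsymbol{x}_0$; in particular they are collinear. *)

(* vectors in R^d are row vectors 'rV[R]_d over a real closed
   field R (so that the Euclidean norm, which needs a square root, exists). *)
From HB Require Import structures.
From mathcomp Require Import all_boot all_order all_algebra.
Set Implicit Arguments. Unset Strict Implicit. Unset Printing Implicit Defensive.
Import Order.TTheory GRing.Theory Num.Theory.
Local Open Scope ring_scope.

Definition dotv (R : rcfType) (d : nat) (u v : 'rV[R]_d) : R := (u *m v^T) 0 0.

Definition norm2 (R : rcfType) (d : nat) (u : 'rV[R]_d) : R := Num.sqrt (dotv u u).

(* A linear subspace S of R^d is represented by a matrix whose row space is S;
   u \in S is (u <= S)%MS.  p is the orthogonal projection P_S x of x onto S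
   iff p \in S and x - p is orthogonal to every vector of S. *)
Definition is_orth_proj (R : rcfType) (d m : nat) (S : 'M[R]_(m, d))
  (x p : 'rV[R]_d) : Prop :=
  (p <= S)%MS /\ forall s : 'rV[R]_d, (s <= S)%MS -> dotv (x - p) s = 0.

Definition is_norm_minimizer (R : rcfType) (d : nat) (C : 'rV[R]_d -> Prop)
  (r0 : 'rV[R]_d) : Prop :=
  C r0 /\ forall r, C r -> norm2 r0 <= norm2 r.

(* Write a candidate r in S as r = a P + w, where P = P_S x0 and w lies in S
   and is orthogonal to P; since x0 - P is orthogonal to S, w is orthogonal to
   x0 as well.  For the tangent hyperplane only the component a matters, so
   dropping w keeps r feasible and shortens it unless w = 0.  For the sphere,
   ||x0 + r||^2 = ||x0||^2 + (a^2 + 2a) ||P||^2 + ||w||^2; if w <> 0 one can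
   absorb ||w||^2 into a larger coefficient b of P, staying on the sphere while
   strictly decreasing ||r||^2 = a^2 ||P||^2 + ||w||^2. *)
From HB Require Import structures.
From mathcomp Require Import all_boot all_order all_algebra.
From mathcomp Require Import ring lra.
Import Order.TTheory GRing.Theory Num.Theory.
Set Implicit Arguments. Unset Strict Implicit.
Local Open Scope ring_scope.

Section InnerProduct.
Variables (R : rcfType) (d : nat).
Implicit Types u v w : 'rV[R]_d.

Lemma dotvE u v : dotv u v = \sum_j u 0 j * v 0 j.
Proof. by rewrite /dotv !mxE; apply: eq_bigr => j _; rewrite !mxE. Qed.

Lemma dotvC u v : dotv u v = dotv v u.
Proof. by rewrite !dotvE; apply: eq_bigr => j _; rewrite mulrC. Qed.

Lemma dotvDl u v w : dotv (u + v) w = dotv u w + dotv v w.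
Proof. by rewrite /dotv mulmxDl mxE. Qed.

Lemma dotvZl a u w : dotv (a *: u) w = a * dotv u w.
Proof. by rewrite /dotv -scalemxAl mxE. Qed.

Lemma dotvBl u v w : dotv (u - v) w = dotv u w - dotv v w.
Proof. by rewrite dotvDl -scaleN1r dotvZl mulN1r. Qed.

Lemma dotvDr u v w : dotv w (u + v) = dotv w u + dotv w v.
Proof. by rewrite dotvC dotvDl !(dotvC w). Qed.

Lemma dotvZr a u w : dotv w (a *: u) = a * dotv w u.
Proof. by rewrite dotvC dotvZl dotvC. Qed.

Lemma dotv_ge0 u : 0 <= dotv u u.
Proof. by rewrite dotvE sumr_ge0 // => j _; rewrite -expr2 sqr_ge0. Qed.

Lemma dotv_eq0 u : (dotv u u == 0) = (u == 0).
Proof.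
apply/idP/eqP => [|->]; last by rewrite dotvE big1 // => j _; rewrite mxE mul0r.
rewrite dotvE psumr_eq0 => [/allP u0|j _]; last by rewrite -expr2 sqr_ge0.
apply/matrixP => i j; rewrite ord1 mxE.
by have := u0 j (mem_index_enum j); rewrite -expr2 sqrf_eq0 => /eqP.
Qed.

Lemma dotv_gt0 u : (0 < dotv u u) = (u != 0).
Proof. by rewrite lt_def dotv_ge0 dotv_eq0 andbT. Qed.

Lemma dotv_sqrD u v : dotv (u + v) (u + v) = dotv u u + 2 * dotv u v + dotv v v.
Proof. by rewrite !(dotvDl, dotvDr) (dotvC v u); ring. Qed.

Lemma norm2_le u v : (norm2 u <= norm2 v) = (dotv u u <= dotv v v).
Proof. by rewrite ler_sqrt ?dotv_ge0. Qed.

End InnerProduct.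

(* Take (b + 1)^2 = (a + 1)^2 + N / p: then b > a, and
   b^2 p = a^2 p + N - 2 (b - a) p. *)
Lemma exists_shorter_level_point (R : rcfType) (p N a : R) :
  0 < p -> 0 < N ->
  exists b, b ^+ 2 * p + 2 * b * p = a ^+ 2 * p + 2 * a * p + N
         /\ b ^+ 2 * p < a ^+ 2 * p + N.
Proof.
move=> p_gt0 N_gt0.
have Np_gt0 : 0 < N / p by rewrite divr_gt0.
pose b := Num.sqrt ((a + 1) ^+ 2 + N / p) - 1.
have b1_sqr : (b + 1) ^+ 2 * p = (a + 1) ^+ 2 * p + N.
  by rewrite subrK sqr_sqrtr ?addr_ge0 ?sqr_ge0 ?ltW // mulrDl divfK ?gt_eqF.
have lt_ab : a < b.
  rewrite -(ltrD2r 1) subrK (le_lt_trans (ler_norm _)) // -sqrtr_sqr.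
  by rewrite ltr_sqrt ?ltrDl // ltr_wpDl ?sqr_ge0.
exists b; split; nra.
Qed.

Section ProjectionMinimizers.
Variables (R : rcfType) (d m : nat) (S : 'M[R]_(m, d)) (x0 P : 'rV[R]_d).
Hypothesis P_proj : is_orth_proj S x0 P.
Hypothesis P_neq0 : P != 0.

Let p := dotv P P.

Let p_gt0 : 0 < p.
Proof. by rewrite dotv_gt0. Qed.

Let P_sub : (P <= S)%MS.
Proof. by case: P_proj. Qed.

Lemma orth_proj_dotl s : (s <= S)%MS -> dotv x0 s = dotv P s.
Proof. by case: P_proj => _ orth /orth; rewrite dotvBl => /eqP; rewrite subr_eq0 => /eqP. Qed.

Lemma dotv_sqrD_sub v : (v <= S)%MS ->
  dotv (x0 + v) (x0 + v) = dotv x0 x0 + 2 * dotv P v + dotv v v.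
Proof. by move=> vS; rewrite dotv_sqrD (orth_proj_dotl vS). Qed.

Lemma orth_proj_decomp r : (r <= S)%MS ->
  exists a w, [/\ r = a *: P + w, (w <= S)%MS, dotv P w = 0 & dotv x0 w = 0].
Proof.
move=> rS.
pose a := dotv P r / p; pose w := r - a *: P.
have wS : (w <= S)%MS by rewrite addmx_sub // -scaleNr scalemx_sub.
have Pw : dotv P w = 0.
  by rewrite dotvDr -scaleNr dotvZr mulNr /a divfK ?gt_eqF // subrr.
by exists a, w; rewrite orth_proj_dotl // Pw /w addrC subrK.
Qed.

Lemma dotv_decomp a w : dotv P w = 0 ->
  dotv (a *: P + w) (a *: P + w) = a ^+ 2 * p + dotv w w.
Proof. by move=> Pw; rewrite dotv_sqrD dotvZl !dotvZr dotvZl Pw /p; ring. Qed.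

Lemma hyperplane_minimizer_collinear (C : 'rV[R]_d -> Prop) r0 :
  (forall u v, dotv x0 u = dotv x0 v -> C u -> C v) ->
  is_norm_minimizer (fun r => (r <= S)%MS /\ C r) r0 -> exists c, r0 = c *: P.
Proof.
move=> C_x0 [[r0S Cr0] r0min].
have [a [w [r0E wS Pw x0w]]] := orth_proj_decomp r0S; subst r0.
exists a; suff /eqP -> : w == 0 by rewrite addr0.
have feasible : (a *: P <= S)%MS /\ C (a *: P).
  split; first exact: scalemx_sub.
  by apply: C_x0 Cr0; rewrite dotvDr x0w addr0.
have := r0min _ feasible; rewrite norm2_le dotv_decomp // dotvZl !dotvZr -/p.
by rewrite -dotv_eq0 eq_le dotv_ge0 andbT; lra.
Qed.

Lemma sphere_minimizer_collinear (rho : R) r0 :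
  is_norm_minimizer (fun r => (r <= S)%MS /\ norm2 (x0 + r) = rho) r0 ->
  exists c, r0 = c *: P.
Proof.
move=> [[r0S r0_on] r0min].
have [a [w [r0E wS Pw x0w]]] := orth_proj_decomp r0S; subst r0.
exists a; have [-> | w_neq0] := eqVneq w 0; first by rewrite addr0.
have w_gt0 : 0 < dotv w w by rewrite dotv_gt0.
have [b [b_level b_shorter]] := exists_shorter_level_point a p_gt0 w_gt0.
have feasible : (b *: P <= S)%MS /\ norm2 (x0 + b *: P) = rho.
  split; first exact: scalemx_sub.
  rewrite -r0_on /norm2 dotv_sqrD_sub ?scalemx_sub //.
  rewrite dotv_sqrD_sub ?addmx_sub ?scalemx_sub // dotv_decomp //.
  rewrite dotvDr dotvZr Pw dotvZl dotvZr dotvZr -/p addr0; congr Num.sqrt; lra.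
have := r0min _ feasible; rewrite norm2_le dotv_decomp //.
by rewrite dotvZl dotvZr -/p => ?; exfalso; lra.
Qed.

End ProjectionMinimizers.

Theorem lemma6 (R : rcfType) (d m : nat) (Rad : R) (x0 : 'rV[R]_d)
  (S : 'M[R]_(m, d)) (Px0 rT rB : 'rV[R]_d) :
  0 < Rad ->
  x0 != 0 ->
  norm2 x0 != Rad ->
  is_orth_proj S x0 Px0 ->
  Px0 != 0 ->
  (exists r : 'rV[R]_d, (r <= S)%MS /\ norm2 (x0 + r) = Rad) ->
  let xstar := (Rad / norm2 x0) *: x0 in
  is_norm_minimizer
    (fun r => (r <= S)%MS /\ dotv (x0 + r - xstar) xstar = 0) rT ->
  is_norm_minimizer
    (fun r => (r <= S)%MS /\ norm2 (x0 + r) = Rad) rB ->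
  (exists c : R, rT = c *: Px0) /\ (exists c : R, rB = c *: Px0).
Proof.
move=> _ _ _ Px0_proj Px0_neq0 _ xstar rT_min rB_min.
split; last exact: (sphere_minimizer_collinear Px0_proj Px0_neq0 rB_min).
apply: (hyperplane_minimizer_collinear Px0_proj Px0_neq0) rT_min => u v x0uv.
by rewrite /xstar !(dotvBl, dotvDl) !(dotvC _ (_ *: x0)) !dotvZl x0uv.
Qed.
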